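(* Let $b\ge 2$ be an integer, $d\in\{0,1,\dots,b-1\}$, and $d'=b-1-d$. For $i\ge1$ put $\gamma'_i=\sum_{0\le a<b,\ a\ne d'}a^i$. Define $v_{0;m}$ for $m\ge0$ recursively by $$(b^{m+1}-b+1)\,v_{0;m}=b^{m+1}+\sum_{i=1}^{m}\binom{m}{i}\gamma'_i\,v_{0;m-i},$$ and for $j\ge1$, $m\ge0$, define $v_{j;m}$ recursively by $$(b^{m+1}-b+1)\,v_{j;m}=\sum_{i=1}^{m}\binom{m}{i}\gamma'_i\,v_{j;m-i}+\sum_{i=0}^{m}\binom{m}{i}(d')^i\,v_{j-1;m-i}$$ (with $0^0=1$). In particular $v_{j;0}=b$ for all $j\ge0$. Then for every $l\ge1$ and $k\ge0$, $$H^{(k)}=\sum_{\substack{0<n<b^{l-1}\\ k(n)=k}}\frac1n\;+\;b\sum_{\substack{b^{l-1}\le n<b^{l}\\ k(n)\le k}}\frac1{n+1}\;+\;\sum_{m=1}^{\infty}\ \sum_{\substack{b^{l-1}\le n<b^{l}\\ k(n)\le k}}\frac{v_{k-k(n);m}}{(n+1)^{m+1}}.$$ Moreover, the numbers $v_{j;m}$ ($j\ge0$, $m\ge1$) satisfy: (i) $0<v_{j;m}\le b$; (ii) for fixed $j$, $(v_{j;m})_{m\ge0}$ is strictly decreasing, except when $b=2$, $d=1$, $j=0$, in which case $v_{0;m}=2$ for all $m$; (iii) for each fixed $m\ge1$, $(v_{j;m})_{j\ge0}$ is strictly decreasing and converges to $b/(m+1)$.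
   Context: For an integer $n\ge0$, its (minimal) base-$b$ representation is the string of base-$b$ digits of $n$ without leading zeros (the empty string for $n=0$); $k(n)$ denotes the number of occurrences of the digit $d$ in this representation. For $k\ge0$, the Irwin sum is $H^{(k)}=\sum_{n\ge1,\ k(n)=k}1/n$ (a convergent series of positive terms; it equals $0$ when $b=2$, $d=1$, $k=0$). *)

From Stdlib Require Import Reals Arith List.
From Coquelicot Require Import Coquelicot.
Open Scope R_scope.

(* Minimal base-b digits (least significant first); empty for n = 0.
   Fuel n suffices since n / b < n for b >= 2. *)
Fixpoint digits_aux (b fuel n : nat) : list nat :=
  match fuel with
  | O => nil
  | S f => if Nat.eqb n 0 then nil else (n mod b)%nat :: digits_aux b f (n / b)%nat
  end.
Definition digits (b n : nat) : list nat := digits_aux b n n.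

Definition kcount (b d n : nat) : nat := count_occ Nat.eq_dec (digits b n) d.

Fixpoint sumR (n : nat) (f : nat -> R) : R :=
  match n with O => 0 | S n' => sumR n' f + f n' end.

Definition gammap (b d i : nat) : R :=
  sumR b (fun a => if Nat.eqb a (b - 1 - d)%nat then 0 else INR a ^ i).

(* one step of the recursion for v_{j;m}: prev = None for j = 0,
   prev = Some g with g = v_{j-1;.} for j >= 1; f gives v_{j;t} for t < m *)
Definition vstep (b d : nat) (prev : option (nat -> R)) (f : nat -> R) (m : nat) : R :=
  let lead := match prev with
              | None => INR b ^ (S m)
              | Some g => sumR (S m) (fun i => Binomial.C m i * INR (b - 1 - d) ^ i * g (m - i)%nat)
              end in
  (sumR m (fun i' => let i := S i' in Binomial.C m i * gammap b d i * f (m - i)%nat) + lead)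
  / (INR b ^ (S m) - INR b + 1).

Fixpoint vtab (b d : nat) (prev : option (nat -> R)) (m : nat) : nat -> R :=
  match m with
  | O => fun _ => vstep b d prev (fun _ => 0) 0
  | S m' => let f := vtab b d prev m' in
            fun t => if Nat.leb t m' then f t else vstep b d prev f m
  end.

Definition vrow (b d : nat) (prev : option (nat -> R)) (m : nat) : R :=
  vtab b d prev m m.

Fixpoint v (b d j : nat) : nat -> R :=
  match j with
  | O => vrow b d None
  | S j' => vrow b d (Some (v b d j'))
  end.

Definition irwin_term (b d k n : nat) : R :=
  if andb (Nat.ltb 0 n) (Nat.eqb (kcount b d n) k) then / INR n else 0.

Definition H (b d k : nat) : R := Series (irwin_term b d k).

From Stdlib Require Import Reals Arith List Lia Lra.
From Coquelicot Require Import Coquelicot.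
Open Scope R_scope.

(* Let [k_r(a)] count the digits [d] among the [r] lowest base-[b] digits of [a], leading zeros
   included. Then
     [v_{j;m} = sum_{r >= 0} b^-r sum_{a < b^r, k_r(a) = j} (1 - a/b^r)^m]:
   splitting [a < b^(r+1)] by its leading digit shows that the partial sums over [r < N] satisfy
   the defining recursion shifted by one level, so they increase to a solution of it, and the
   recursion determines [v]. Since [1/(n b^r + a) = sum_m b^-r (1 - a/b^r)^m / (n+1)^(m+1)],
   grouping the integers [x >= b^(l-1)] as [x = n b^r + a] with [b^(l-1) <= n < b^l] gives the
   identity, the term [m = 0] contributing [b/(n+1)].
   The recursion has nonnegative coefficients, so (i) and the monotonicity in [j] follow by
   comparison of solutions, while the monotonicity in [m] is read off the explicit formula.
   The limit [j -> oo] solves the recursion with coefficients [gamma'_i + d'^i = sum_{a<b} a^i],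
   whose solution with value [b] at [m = 0] is [b/(m+1)] by the integrated binomial formula. *)

Lemma sumR_ext n f g : (forall i, (i < n)%nat -> f i = g i) -> sumR n f = sumR n g.
Proof. induction n as [|n IH]; intros H; simpl; [reflexivity|]. rewrite IH, H; auto. Qed.

Lemma sumR_plus n f g : sumR n (fun i => f i + g i) = sumR n f + sumR n g.
Proof. induction n as [|n IH]; simpl; [lra|]. rewrite IH; lra. Qed.

Lemma sumR_minus n f g : sumR n (fun i => f i - g i) = sumR n f - sumR n g.
Proof. induction n as [|n IH]; simpl; [lra|]. rewrite IH; lra. Qed.

Lemma sumR_scal_l n c f : sumR n (fun i => c * f i) = c * sumR n f.
Proof. induction n as [|n IH]; simpl; [lra|]. rewrite IH; lra. Qed.

Lemma sumR_scal_r n c f : sumR n (fun i => f i * c) = sumR n f * c.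
Proof. induction n as [|n IH]; simpl; [lra|]. rewrite IH; lra. Qed.

Lemma sumR_const n c : sumR n (fun _ => c) = INR n * c.
Proof. induction n as [|n IH]; cbn [sumR]; [simpl; lra|]. rewrite IH, S_INR; lra. Qed.

Lemma sumR_0 n : sumR n (fun _ => 0) = 0.
Proof. rewrite sumR_const; ring. Qed.

Lemma sumR_eq_0 n f : (forall i, (i < n)%nat -> f i = 0) -> sumR n f = 0.
Proof. intros H. rewrite <- (sumR_0 n). apply sumR_ext. auto. Qed.

Lemma sumR_le n f g : (forall i, (i < n)%nat -> f i <= g i) -> sumR n f <= sumR n g.
Proof. induction n as [|n IH]; simpl; intros H; [lra|]. apply Rplus_le_compat; auto. Qed.

Lemma sumR_nonneg n f : (forall i, (i < n)%nat -> 0 <= f i) -> 0 <= sumR n f.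
Proof. intros H. rewrite <- (sumR_0 n). apply sumR_le; auto. Qed.

Lemma sumR_ge_term n f i0 :
  (forall i, (i < n)%nat -> 0 <= f i) -> (i0 < n)%nat -> f i0 <= sumR n f.
Proof.
  induction n as [|n IH]; simpl; intros H Hi; [lia|].
  destruct (Nat.eq_dec i0 n) as [->|Hn].
  - assert (0 <= sumR n f) by (apply sumR_nonneg; auto). lra.
  - assert (f i0 <= sumR n f) by (apply IH; auto; lia). assert (0 <= f n) by auto. lra.
Qed.

Lemma sumR_le_len p q f : (forall n, 0 <= f n) -> (p <= q)%nat -> sumR p f <= sumR q f.
Proof. intros Hf H. induction H; [lra|]. cbn [sumR]. pose proof (Hf m). lra. Qed.

Lemma sumR_shift n f : sumR (S n) f = f 0%nat + sumR n (fun i => f (S i)).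
Proof. induction n as [|n IH]; simpl in *; [lra|]. rewrite IH; lra. Qed.

Lemma sumR_add_len n p f : sumR (n + p) f = sumR n f + sumR p (fun i => f (n + i)%nat).
Proof.
  induction p as [|p IH]; simpl; [rewrite Nat.add_0_r; lra|].
  rewrite Nat.add_succ_r; simpl. rewrite IH; lra.
Qed.

Lemma sumR_mul_len p q f :
  sumR (p * q) f = sumR p (fun t => sumR q (fun a => f (t * q + a)%nat)).
Proof.
  induction p as [|p IH]; simpl; [reflexivity|].
  rewrite Nat.add_comm, sumR_add_len, IH. reflexivity.
Qed.

Lemma sumR_swap n p f :
  sumR n (fun i => sumR p (fun j => f i j)) = sumR p (fun j => sumR n (fun i => f i j)).
Proof.
  induction n as [|n IH]; simpl; [now rewrite sumR_0|]. rewrite IH, <- sumR_plus. reflexivity.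
Qed.

Lemma sumR_rev n f : sumR n f = sumR n (fun i => f (n - 1 - i)%nat).
Proof.
  induction n as [|n IH]; [reflexivity|].
  rewrite (sumR_shift n (fun i => f (S n - 1 - i)%nat)). cbn [sumR]. rewrite IH.
  replace (S n - 1 - 0)%nat with n by lia. rewrite Rplus_comm. f_equal.
  apply sumR_ext; intros i Hi. f_equal. lia.
Qed.

Lemma sumR_sum_f_R0 n f : sumR (S n) f = sum_f_R0 f n.
Proof. induction n as [|n IH]; simpl in *; [lra|]. rewrite <- IH; reflexivity. Qed.

Lemma sumR_skip n p f :
  (p < n)%nat -> sumR n (fun a => if Nat.eqb a p then 0 else f a) + f p = sumR n f.
Proof.
  induction n as [|n IH]; intros H; [lia|]. cbn [sumR].
  destruct (Nat.eq_dec p n) as [->|Hn].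
  - rewrite Nat.eqb_refl, (sumR_ext _ _ f); [lra|].
    intros i Hi. destruct (Nat.eqb_spec i n); [lia|reflexivity].
  - rewrite <- IH by lia. destruct (Nat.eqb_spec n p); [lia|lra].
Qed.

Lemma sumR_split_at M K f :
  (K <= M)%nat -> sumR M f = sumR K f + sumR M (fun x => if Nat.leb K x then f x else 0).
Proof.
  induction M as [|M IH]; intros H.
  - replace K with 0%nat by lia. simpl. lra.
  - destruct (Nat.eq_dec K (S M)) as [->|HK].
    + rewrite (sumR_ext (S M) (fun x => if Nat.leb (S M) x then f x else 0) (fun _ => 0)).
      * rewrite sumR_0; lra.
      * intros i Hi. destruct (Nat.leb_spec (S M) i); [lia|reflexivity].
    + cbn [sumR]. rewrite IH by lia. destruct (Nat.leb_spec K M); [lra|lia].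
Qed.

Lemma sumR_telescope n (f : nat -> R) : sumR n (fun a => f (S a) - f a) = f n - f 0%nat.
Proof. induction n as [|n IH]; cbn [sumR]; [ring|]. rewrite IH. ring. Qed.

Lemma is_lim_seq_sumR n (f : nat -> nat -> R) (l : nat -> R) :
  (forall i, (i < n)%nat -> is_lim_seq (fun j => f j i) (l i)) ->
  is_lim_seq (fun j => sumR n (f j)) (sumR n l).
Proof.
  induction n as [|n IH]; intros H; cbn [sumR].
  - apply is_lim_seq_const.
  - apply is_lim_seq_plus'; auto.
Qed.

Lemma is_series_zero : is_series (fun _ => 0) 0.
Proof.
  pose proof (is_series_scal_r 0 _ _ (is_series_geom 0 ltac:(rewrite Rabs_R0; lra))) as H.
  rewrite Rmult_0_r in H. revert H. apply is_series_ext. intros; apply Rmult_0_r.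
Qed.

Lemma is_series_sumR n (f : nat -> nat -> R) (s : nat -> R) :
  (forall i, (i < n)%nat -> is_series (f i) (s i)) ->
  is_series (fun m => sumR n (fun i => f i m)) (sumR n s).
Proof.
  induction n as [|n IH]; intros H; cbn [sumR].
  - apply is_series_zero.
  - apply (is_series_plus (fun m => sumR n (fun i => f i m)) (f n)); auto.
Qed.

Lemma INR_ge_2 n : (2 <= n)%nat -> 2 <= INR n.
Proof. intros H. apply (le_INR 2 n H). Qed.

Lemma pow_lt_strict x y m : 0 <= x < y -> (1 <= m)%nat -> x ^ m < y ^ m.
Proof.
  intros H Hm. destruct m as [|m]; [lia|]. simpl. pose proof (pow_incr x y m ltac:(lra)).
  assert (0 < y ^ m) by (apply pow_lt; lra). nra.
Qed.

Lemma binomial_sumR (x y : R) m :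
  (x + y) ^ m = sumR (S m) (fun i => Binomial.C m i * x ^ i * y ^ (m - i)).
Proof. rewrite sumR_sum_f_R0, binomial. reflexivity. Qed.

Lemma C_n_0 n : Binomial.C n 0 = 1.
Proof. unfold Binomial.C. rewrite Nat.sub_0_r. simpl. field. apply INR_fact_neq_0. Qed.

Lemma C_n_n n : Binomial.C n n = 1.
Proof. unfold Binomial.C. rewrite Nat.sub_diag. simpl. field. apply INR_fact_neq_0. Qed.

Lemma C_nonneg n i : 0 <= Binomial.C n i.
Proof.
  unfold Binomial.C. apply Rlt_le, Rdiv_lt_0_compat; [apply INR_fact_lt_0|].
  apply Rmult_lt_0_compat; apply INR_fact_lt_0.
Qed.

(* both sides are [int_0^1 (x + y)^m dy] *)
Lemma binomial_integral x m :
  sumR (S m) (fun i => Binomial.C m i * x ^ i / (INR (m - i) + 1)) =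
  ((x + 1) ^ S m - x ^ S m) / (INR m + 1).
Proof.
  transitivity (sumR (S m) (fun i => Binomial.C (S m) i * x ^ i * 1 ^ (S m - i)) / (INR m + 1)).
  - unfold Rdiv. rewrite <- sumR_scal_r. apply sumR_ext. intros i Hi.
    rewrite pow1, pascal_step2 by lia. replace (S m - i)%nat with (S (m - i)) by lia.
    rewrite !S_INR. pose proof (pos_INR m). pose proof (pos_INR (m - i)). field; lra.
  - f_equal. rewrite binomial_sumR. cbn [sumR]. rewrite C_n_n, Nat.sub_diag. simpl pow at 3. ring.
Qed.

Lemma is_lim_seq_unique_R (u : nat -> R) (x y : R) : is_lim_seq u x -> is_lim_seq u y -> x = y.
Proof.
  intros Hx Hy. apply is_lim_seq_unique in Hx, Hy. rewrite Hx in Hy. now injection Hy.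
Qed.

Lemma is_lim_seq_real_Lim (u : nat -> R) : ex_finite_lim_seq u -> is_lim_seq u (real (Lim_seq u)).
Proof. intros [l Hl]. rewrite (is_lim_seq_unique _ _ Hl). exact Hl. Qed.

Lemma is_series_of_subseq (a : nat -> R) (g : nat -> nat) (L : R) :
  (forall n, 0 <= a n) -> (forall M, (g M <= g (S M))%nat) -> (forall M, (M <= g M)%nat) ->
  is_lim_seq (fun M => sumR (g M) a) L -> is_series a L.
Proof.
  intros Ha Hg Hid Hl.
  assert (Hmono : forall M M', (M <= M')%nat -> (g M <= g M')%nat).
  { intros M M' H. induction H as [|M' H IH]; [lia|]. specialize (Hg M'). lia. }
  assert (Hup : forall M, sumR (g M) a <= L).
  { intros M. change (Rbar_le (sumR (g M) a) L).
    apply (is_lim_seq_le_loc (fun _ => sumR (g M) a) (fun M' => sumR (g M') a));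
      [|apply is_lim_seq_const|exact Hl].
    exists M. intros M' HM'. apply sumR_le_len; auto. }
  unfold is_series. apply (is_lim_seq_spec _ (Finite L)) in Hl.
  apply (is_lim_seq_spec (sum_n a) (Finite L)). intros eps.
  destruct (Hl eps) as [M0 HM0]. exists (g M0). intros N HN.
  rewrite sum_n_Reals, <- sumR_sum_f_R0.
  specialize (HM0 M0 (le_n _)). apply Rabs_def2 in HM0.
  assert (sumR (g M0) a <= sumR (S N) a) by (apply sumR_le_len; auto; lia).
  assert (sumR (S N) a <= sumR (g (S N)) a) by (apply sumR_le_len; auto).
  pose proof (Hup (S N)). apply Rabs_def1; lra.
Qed.

Lemma geom_tail_series c x : 0 < x -> is_series (fun m => c / (x + 1) ^ S m) (c / x).
Proof.
  intros Hx.
  assert (Hq : Rabs (/ (x + 1)) < 1).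
  { rewrite Rabs_right by (apply Rle_ge, Rlt_le, Rinv_0_lt_compat; lra).
    apply Rmult_lt_reg_r with (x + 1); [lra|]. rewrite Rinv_l; lra. }
  replace (c / x) with (/ (1 - / (x + 1)) * (c / (x + 1))) by (field; lra).
  revert Hq. intros Hq%is_series_geom%(is_series_scal_r (c / (x + 1))). revert Hq.
  apply is_series_ext. intros m. simpl. rewrite pow_inv. field.
  split; [apply pow_nonzero|]; lra.
Qed.

Definition bconv (c u : nat -> R) (m : nat) : R :=
  sumR (S m) (fun i => Binomial.C m i * c i * u (m - i)%nat).

Definition bconv_tail (c u : nat -> R) (m : nat) : R :=
  sumR m (fun i => Binomial.C m (S i) * c (S i) * u (m - S i)%nat).

Section BinomialConvolution.
Variable c : nat -> R.

Lemma bconv_head u m : bconv c u m = c 0%nat * u m + bconv_tail c u m.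
Proof. unfold bconv, bconv_tail. rewrite sumR_shift, C_n_0, Nat.sub_0_r. ring. Qed.

Lemma bconv_ext u u' m : (forall t, (t <= m)%nat -> u t = u' t) -> bconv c u m = bconv c u' m.
Proof. intros H. apply sumR_ext. intros i Hi. rewrite H by lia. reflexivity. Qed.

Lemma bconv_tail_ext u u' m :
  (forall t, (t < m)%nat -> u t = u' t) -> bconv_tail c u m = bconv_tail c u' m.
Proof. intros H. apply sumR_ext. intros i Hi. rewrite H by lia. reflexivity. Qed.

Lemma bconv_minus u u' m : bconv c (fun t => u t - u' t) m = bconv c u m - bconv c u' m.
Proof. unfold bconv. rewrite <- sumR_minus. apply sumR_ext; intros; ring. Qed.

Lemma bconv_const x m : bconv c (fun _ => x) m = x * bconv c (fun _ => 1) m.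
Proof. unfold bconv. rewrite <- sumR_scal_l. apply sumR_ext; intros; ring. Qed.

Lemma bconv_sumR N (f : nat -> nat -> R) m :
  bconv c (fun t => sumR N (fun r => f r t)) m = sumR N (fun r => bconv c (f r) m).
Proof.
  unfold bconv. rewrite <- sumR_swap. apply sumR_ext. intros i _. symmetry. apply sumR_scal_l.
Qed.

Lemma is_lim_seq_bconv (u : nat -> nat -> R) (l : nat -> R) m :
  (forall t, (t <= m)%nat -> is_lim_seq (fun n => u n t) (l t)) ->
  is_lim_seq (fun n => bconv c (u n) m) (bconv c l m).
Proof.
  intros H. apply is_lim_seq_sumR. intros i Hi.
  apply is_lim_seq_mult'; [apply is_lim_seq_const|]. apply H. lia.
Qed.

Hypothesis c_nonneg : forall i, 0 <= c i.

Lemma bconv_le u u' m :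
  (forall t, (t <= m)%nat -> u t <= u' t) -> bconv c u m <= bconv c u' m.
Proof.
  intros H. apply sumR_le. intros i Hi.
  apply Rmult_le_compat_l; [apply Rmult_le_pos; auto using C_nonneg|apply H; lia].
Qed.

Lemma bconv_tail_le u x m :
  (forall t, (t < m)%nat -> u t <= x) ->
  bconv_tail c u m <= x * (bconv c (fun _ => 1) m - c 0%nat).
Proof.
  intros H. apply Rle_trans with (bconv_tail c (fun _ => x) m).
  - apply sumR_le. intros i Hi.
    apply Rmult_le_compat_l; [apply Rmult_le_pos; auto using C_nonneg|apply H; lia].
  - pose proof (bconv_head (fun _ => x) m) as E. rewrite bconv_const in E. lra.
Qed.

Lemma bconv_tail_nonneg u m : (forall t, (t < m)%nat -> 0 <= u t) -> 0 <= bconv_tail c u m.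
Proof.
  intros H. apply sumR_nonneg. intros i Hi.
  apply Rmult_le_pos; [apply Rmult_le_pos; auto using C_nonneg|apply H; lia].
Qed.

End BinomialConvolution.

Lemma bconv_coeff_plus c c' u m : bconv (fun i => c i + c' i) u m = bconv c u m + bconv c' u m.
Proof. unfold bconv. rewrite <- sumR_plus. apply sumR_ext; intros; ring. Qed.

Lemma bconv_pow_1 y m : bconv (pow y) (fun _ => 1) m = (y + 1) ^ m.
Proof. rewrite binomial_sumR. apply sumR_ext; intros. rewrite pow1. ring. Qed.

Lemma bconv_pow_pos y u m :
  0 <= y -> (forall t, (t <= m)%nat -> 0 <= u t) -> 0 < u m -> 0 < bconv (pow y) u m.
Proof.
  intros Hy Hu Hm. rewrite bconv_head. simpl pow.
  assert (0 <= bconv_tail (pow y) u m).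
  { apply bconv_tail_nonneg; [intros; apply pow_le; auto|]. intros; apply Hu; lia. }
  lra.
Qed.

(** * The recursion for [v] *)

Lemma vtab_stable b d p M t : (t <= M)%nat -> vtab b d p M t = vtab b d p t t.
Proof.
  induction M as [|M IH]; intros H.
  - replace t with 0%nat by lia. reflexivity.
  - cbn [vtab]. destruct (Nat.leb_spec t M); [apply IH; lia|].
    replace t with (S M) by lia. cbn [vtab]. destruct (Nat.leb_spec (S M) M); [lia|reflexivity].
Qed.

Lemma vstep_ext b d p f g m :
  (forall t, (t < m)%nat -> f t = g t) -> vstep b d p f m = vstep b d p g m.
Proof.
  intros H. unfold vstep. do 2 f_equal. apply sumR_ext. intros i Hi. rewrite H by lia. reflexivity.
Qed.

Lemma vrow_fix b d p m : vrow b d p m = vstep b d p (vrow b d p) m.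
Proof.
  unfold vrow at 1. destruct m as [|M]; cbn [vtab].
  - apply vstep_ext. lia.
  - destruct (Nat.leb_spec (S M) M); [lia|].
    apply vstep_ext. intros t Ht. apply vtab_stable; lia.
Qed.

Section IrwinRecursion.
Variables b d : nat.
Hypothesis Hb : (2 <= b)%nat.
Hypothesis Hd : (d < b)%nat.

Lemma gammap_nonneg i : 0 <= gammap b d i.
Proof.
  apply sumR_nonneg. intros a _. destruct (Nat.eqb _ _); [lra|]. apply pow_le, pos_INR.
Qed.

Lemma gammap_0 : gammap b d 0 = INR b - 1.
Proof.
  pose proof (sumR_skip b (b - 1 - d) (fun _ => 1) ltac:(lia)) as E.
  rewrite sumR_const in E. unfold gammap. simpl pow. lra.
Qed.

Lemma bconv_gammap_1 m :
  bconv (gammap b d) (fun _ => 1) m =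
  sumR b (fun a => if Nat.eqb a (b - 1 - d) then 0 else (INR a + 1) ^ m).
Proof.
  unfold bconv, gammap.
  transitivity (sumR (S m) (fun i => sumR b (fun a =>
     Binomial.C m i * (if Nat.eqb a (b - 1 - d) then 0 else INR a ^ i)))).
  { apply sumR_ext; intros. rewrite Rmult_1_r, sumR_scal_l. reflexivity. }
  rewrite sumR_swap. apply sumR_ext; intros a _. destruct (Nat.eqb _ _).
  - apply sumR_eq_0. intros; ring.
  - rewrite binomial_sumR. apply sumR_ext; intros. rewrite pow1. ring.
Qed.

Lemma succ_pow_le a m : (a < b)%nat -> (INR a + 1) ^ m <= INR b ^ m.
Proof. intros Ha. apply pow_incr. rewrite <- S_INR. split; [apply pos_INR|apply le_INR; lia]. Qed.

Lemma bconv_gammap_1_le m : bconv (gammap b d) (fun _ => 1) m <= (INR b - 1) * INR b ^ m.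
Proof.
  pose proof (sumR_skip b (b - 1 - d) (fun _ => INR b ^ m) ltac:(lia)) as E.
  rewrite sumR_const in E. rewrite bconv_gammap_1.
  apply Rle_trans with (sumR b (fun a => if Nat.eqb a (b - 1 - d) then 0 else INR b ^ m)); [|nra].
  apply sumR_le. intros a Ha. destruct (Nat.eqb _ _); [lra|apply succ_pow_le; auto].
Qed.

Lemma bconv_gammap_1_dprime_le m :
  bconv (gammap b d) (fun _ => 1) m + (INR (b - 1 - d) + 1) ^ m <= INR b ^ S m.
Proof.
  rewrite bconv_gammap_1, (sumR_skip b (b - 1 - d) (fun a => (INR a + 1) ^ m)) by lia.
  apply Rle_trans with (sumR b (fun _ => INR b ^ m)).
  - apply sumR_le. intros a Ha. apply succ_pow_le. auto.
  - rewrite sumR_const. simpl. lra.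
Qed.

Definition vlead (u : nat -> nat -> R) (j m : nat) : R :=
  match j with
  | O => INR b ^ S m
  | S j' => bconv (pow (INR (b - 1 - d))) (u j') m
  end.

Lemma denominator_ge_1 m : 1 <= INR b ^ S m - INR b + 1.
Proof.
  pose proof (INR_ge_2 b Hb). assert (1 <= INR b ^ m) by (apply pow_R1_Rle; lra). simpl. nra.
Qed.

Lemma v_rec j m :
  INR b ^ S m * v b d j m = vlead (v b d) j m + bconv (gammap b d) (v b d j) m.
Proof.
  rewrite bconv_head, gammap_0. pose proof (denominator_ge_1 m).
  destruct j; cbn [v vlead]; rewrite vrow_fix; unfold vstep, bconv, bconv_tail; cbn [v];
    field; lra.
Qed.

Definition solves (L u : nat -> R) :=
  forall m, INR b ^ S m * u m = L m + bconv (gammap b d) u m.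

Lemma solves_explicit L u m :
  solves L u -> u m = (L m + bconv_tail (gammap b d) u m) / (INR b ^ S m - INR b + 1).
Proof.
  intros H. specialize (H m). rewrite bconv_head, gammap_0 in H.
  pose proof (denominator_ge_1 m).
  apply Rmult_eq_reg_r with (INR b ^ S m - INR b + 1); [|lra].
  unfold Rdiv. rewrite Rmult_assoc, Rinv_l, Rmult_1_r by lra. lra.
Qed.

Lemma solves_unique L u u' : solves L u -> solves L u' -> forall m, u m = u' m.
Proof.
  intros H H' m. induction m as [m IH] using (well_founded_induction lt_wf).
  rewrite (solves_explicit L u m H), (solves_explicit L u' m H').
  rewrite (bconv_tail_ext _ u u' m IH). reflexivity.
Qed.

Lemma solves_pos L u :
  solves L u -> 0 <= u 0%nat -> (forall m, (1 <= m)%nat -> 0 < L m) ->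
  forall m, (1 <= m)%nat -> 0 < u m.
Proof.
  intros H H0 HL m. induction m as [m IH] using (well_founded_induction lt_wf). intros Hm.
  rewrite (solves_explicit L u m H). pose proof (denominator_ge_1 m).
  assert (0 <= bconv_tail (gammap b d) u m).
  { apply bconv_tail_nonneg; [apply gammap_nonneg|]. intros [|t] Ht; [lra|].
    apply Rlt_le, IH; lia. }
  specialize (HL m Hm). apply Rdiv_lt_0_compat; lra.
Qed.

(* the bound on [L] makes the constant [b] a supersolution *)
Lemma solves_le_b L u :
  solves L u -> (forall m, L m <= INR b * (INR b ^ S m - bconv (gammap b d) (fun _ => 1) m)) ->
  forall m, u m <= INR b.
Proof.
  intros H HL m. induction m as [m IH] using (well_founded_induction lt_wf).
  rewrite (solves_explicit L u m H). pose proof (denominator_ge_1 m).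
  pose proof (bconv_tail_le _ gammap_nonneg u (INR b) m IH) as Ht.
  rewrite gammap_0 in Ht. specialize (HL m).
  apply Rmult_le_reg_r with (INR b ^ S m - INR b + 1); [lra|].
  unfold Rdiv. rewrite Rmult_assoc, Rinv_l, Rmult_1_r by lra. nra.
Qed.

Lemma v_at_0 j : v b d j 0 = INR b.
Proof.
  induction j as [|j IH]; [pose proof (v_rec 0 0) as E|pose proof (v_rec (S j) 0) as E];
    cbn [vlead] in E; unfold bconv in E; cbn [sumR] in E; rewrite ?C_n_0, gammap_0 in E;
    rewrite Nat.sub_0_r, pow_1 in E; [|rewrite IH in E]; lra.
Qed.

Lemma v_pos j m : 0 < v b d j m.
Proof.
  pose proof (INR_ge_2 b Hb). revert m. induction j as [|j IH]; intros [|m];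
    try (rewrite v_at_0; lra).
  - apply (solves_pos (vlead (v b d) 0)); [intros k; apply v_rec|rewrite v_at_0; lra| |lia].
    intros k _. apply pow_lt. lra.
  - apply (solves_pos (vlead (v b d) (S j))); [intros k; apply v_rec|rewrite v_at_0; lra| |lia].
    intros k _. apply bconv_pow_pos; [apply pos_INR|intros t _; apply Rlt_le|]; apply IH.
Qed.

Lemma v_le_b j m : v b d j m <= INR b.
Proof.
  pose proof (INR_ge_2 b Hb). revert m. induction j as [|j IH].
  - apply (solves_le_b (vlead (v b d) 0)); [intros k; apply v_rec|].
    intros k. pose proof (bconv_gammap_1_le k). simpl. nra.
  - apply (solves_le_b (vlead (v b d) (S j))); [intros k; apply v_rec|]. intros k.
    apply Rle_trans with (bconv (pow (INR (b - 1 - d))) (fun _ => INR b) k).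
    + apply bconv_le; [intros; apply pow_le, pos_INR|]. intros; apply IH.
    + rewrite bconv_const, bconv_pow_1. pose proof (bconv_gammap_1_dprime_le k). nra.
Qed.

Definition vsystem (u : nat -> nat -> R) := forall j, solves (vlead u j) (u j).

Lemma vsystem_v : vsystem (v b d).
Proof. intros j m. apply v_rec. Qed.

Lemma vsystem_unique u : vsystem u -> forall j m, u j m = v b d j m.
Proof.
  intros Hu j. induction j as [|j IH].
  - exact (solves_unique _ _ _ (Hu 0%nat) (vsystem_v 0%nat)).
  - apply (solves_unique (vlead (v b d) (S j))); [|apply vsystem_v].
    intros m. rewrite (Hu (S j) m). cbn [vlead]. rewrite (bconv_ext _ (u j) (v b d j)); auto.
Qed.

(** * An explicit formula for [v] *)

(* [k_r(a)] of the proof idea: leading zeros of the [r]-digit representation count *)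
Fixpoint kcount_pad (r a : nat) : nat :=
  match r with
  | O => O
  | S r' => ((if Nat.eqb (a mod b) d then 1 else 0) + kcount_pad r' (a / b))%nat
  end.

Lemma kcount_pad_top r t a :
  (t < b)%nat -> (a < b ^ r)%nat ->
  kcount_pad (S r) (t * b ^ r + a) = ((if Nat.eqb t d then 1 else 0) + kcount_pad r a)%nat.
Proof.
  revert a. induction r as [|r IH]; intros a Ht Ha.
  - simpl in Ha. replace a with 0%nat by lia. cbn [kcount_pad].
    rewrite Nat.pow_0_r, !Nat.add_0_r, Nat.mul_1_r, Nat.mod_small by lia. reflexivity.
  - cbn [kcount_pad]. cbn [kcount_pad] in IH.
    replace (t * b ^ S r + a)%nat with (a + (t * b ^ r) * b)%nat by (simpl; lia).
    rewrite Nat.Div0.mod_add, Nat.div_add by lia.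
    replace (a / b + t * b ^ r)%nat with (t * b ^ r + a / b)%nat by lia.
    rewrite IH; [lia|lia|]. simpl in Ha. apply Nat.Div0.div_lt_upper_bound. lia.
Qed.

Definition weight (r a m : nat) : R := (/ INR b) ^ r * (1 - INR a / INR b ^ r) ^ m.

Definition vlevel (r j m : nat) : R :=
  sumR (b ^ r) (fun a => if Nat.eqb (kcount_pad r a) j then weight r a m else 0).

Definition vlevel_below (r j m : nat) : R :=
  match j with O => 0 | S j' => vlevel r j' m end.

Definition vpartial (N j m : nat) : R := sumR N (fun r => vlevel r j m).

(* [1 - (t b^r + a)/b^(r+1) = (b-1-t + (1 - a/b^r))/b], then expand binomially *)
Lemma weight_top r t a m :
  (t < b)%nat ->
  INR b ^ S m * weight (S r) (t * b ^ r + a) m =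
  sumR (S m) (fun i => Binomial.C m i * INR (b - 1 - t) ^ i * weight r a (m - i)).
Proof.
  intros Ht. pose proof (INR_ge_2 b Hb).
  assert (HP : 0 < INR b ^ r) by (apply pow_lt; lra).
  assert (E : INR b * (1 - INR (t * b ^ r + a) / INR b ^ S r)
              = INR (b - 1 - t) + (1 - INR a / INR b ^ r)).
  { rewrite plus_INR, mult_INR, pow_INR, !minus_INR by lia. simpl. field. lra. }
  unfold weight.
  transitivity ((/ INR b) ^ r * (INR (b - 1 - t) + (1 - INR a / INR b ^ r)) ^ m).
  - rewrite <- E, Rpow_mult_distr, !pow_inv. simpl. field. lra.
  - rewrite binomial_sumR, <- sumR_scal_l. apply sumR_ext. intros; ring.
Qed.

Lemma gammap_rev i :
  gammap b d i = sumR b (fun t => if Nat.eqb t d then 0 else INR (b - 1 - t) ^ i).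
Proof.
  unfold gammap. rewrite sumR_rev. apply sumR_ext. intros t Ht.
  destruct (Nat.eqb_spec (b - 1 - t) (b - 1 - d)), (Nat.eqb_spec t d); try lia; reflexivity.
Qed.

(* a leading digit [t <> d] keeps the count [j], the leading digit [d] lowers it to [j - 1] *)
Lemma vlevel_succ_digits r j m :
  INR b ^ S m * vlevel (S r) j m =
  sumR b (fun t => sumR (S m) (fun i => Binomial.C m i * INR (b - 1 - t) ^ i *
    (if Nat.eqb t d then vlevel_below r j (m - i) else vlevel r j (m - i)))).
Proof.
  unfold vlevel at 1. change (b ^ S r)%nat with (b * b ^ r)%nat.
  rewrite sumR_mul_len, <- sumR_scal_l. apply sumR_ext. intros t Ht.
  rewrite <- sumR_scal_l.
  transitivity (sumR (b ^ r) (fun a => sumR (S m) (fun i =>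
     Binomial.C m i * INR (b - 1 - t) ^ i *
     (if Nat.eqb ((if Nat.eqb t d then 1 else 0) + kcount_pad r a) j
      then weight r a (m - i) else 0)))).
  - apply sumR_ext. intros a Ha. rewrite kcount_pad_top by auto. destruct (Nat.eqb _ j).
    + apply weight_top. auto.
    + rewrite Rmult_0_r. symmetry. apply sumR_eq_0. intros; ring.
  - rewrite sumR_swap. apply sumR_ext. intros i Hi. rewrite sumR_scal_l. f_equal.
    unfold vlevel_below. destruct (Nat.eqb t d); [destruct j as [|j]|]; try reflexivity.
    apply sumR_eq_0. reflexivity.
Qed.

Lemma vlevel_succ r j m :
  INR b ^ S m * vlevel (S r) j m =
  bconv (gammap b d) (vlevel r j) m + bconv (pow (INR (b - 1 - d))) (vlevel_below r j) m.
Proof.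
  rewrite vlevel_succ_digits, sumR_swap. unfold bconv. rewrite <- sumR_plus.
  apply sumR_ext. intros i Hi.
  rewrite <- (sumR_skip b d) by auto. rewrite Nat.eqb_refl, gammap_rev.
  rewrite (sumR_ext b _ (fun t => Binomial.C m i * vlevel r j (m - i)%nat *
     (if Nat.eqb t d then 0 else INR (b - 1 - t) ^ i))).
  - rewrite sumR_scal_l. ring.
  - intros t _. destruct (Nat.eqb t d); ring.
Qed.

Lemma vlevel_0 j m : vlevel 0 j m = if Nat.eqb j 0 then 1 else 0.
Proof.
  unfold vlevel, weight. cbn [Nat.pow sumR kcount_pad pow INR].
  destruct j; cbn [Nat.eqb]; [|ring].
  unfold Rdiv. rewrite Rmult_0_l, Rminus_0_r, pow1. ring.
Qed.

Lemma vpartial_succ N j m :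
  INR b ^ S m * vpartial (S N) j m = vlead (vpartial N) j m + bconv (gammap b d) (vpartial N j) m.
Proof.
  unfold vpartial. rewrite sumR_shift, vlevel_0, Rmult_plus_distr_l, <- sumR_scal_l.
  rewrite (sumR_ext N _ _ (fun r _ => vlevel_succ r j m)), sumR_plus.
  rewrite (bconv_sumR _ N (fun r t => vlevel r j t)).
  destruct j as [|j]; cbn [vlead vlevel_below Nat.eqb].
  - rewrite Rmult_1_r, (sumR_eq_0 N (fun r => bconv _ (vlevel_below r 0) m)), Rplus_0_r;
      [reflexivity|].
    intros r _. change (vlevel_below r 0) with (fun _ : nat => 0). rewrite bconv_const. ring.
  - rewrite (bconv_sumR _ N (fun r t => vlevel r j t)), Rmult_0_r, Rplus_0_l, Rplus_comm.
    reflexivity.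
Qed.

Lemma ratio_range r a : (a <= b ^ r)%nat -> 0 <= INR a / INR b ^ r <= 1.
Proof.
  intros Ha. pose proof (INR_ge_2 b Hb). assert (0 < INR b ^ r) by (apply pow_lt; lra).
  split; [apply Rdiv_le_0_compat; [apply pos_INR|lra]|].
  apply Rmult_le_reg_r with (INR b ^ r); auto. unfold Rdiv.
  rewrite Rmult_assoc, Rinv_l, Rmult_1_r, Rmult_1_l, <- pow_INR by lra. apply le_INR. auto.
Qed.

Lemma ratio_pos_lt_1 r a : (1 <= a < b ^ r)%nat -> 0 < INR a / INR b ^ r < 1.
Proof.
  intros Ha. pose proof (INR_ge_2 b Hb). assert (0 < INR b ^ r) by (apply pow_lt; lra).
  split; [apply Rdiv_lt_0_compat; [apply (lt_INR 0); lia|auto]|].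
  apply Rmult_lt_reg_r with (INR b ^ r); auto. unfold Rdiv.
  rewrite Rmult_assoc, Rinv_l, Rmult_1_r, Rmult_1_l, <- pow_INR by lra. apply lt_INR. lia.
Qed.

Lemma weight_drop r a m :
  weight r a m - weight r a (S m) =
  (/ INR b) ^ r * ((1 - INR a / INR b ^ r) ^ m * (INR a / INR b ^ r)).
Proof. unfold weight. simpl. ring. Qed.

Lemma weight_nonneg r a m : (a <= b ^ r)%nat -> 0 <= weight r a m.
Proof.
  intros Ha. pose proof (ratio_range r a Ha). pose proof (INR_ge_2 b Hb).
  apply Rmult_le_pos; apply pow_le; [apply Rlt_le, Rinv_0_lt_compat|]; lra.
Qed.

Lemma weight_decr r a m : (a <= b ^ r)%nat -> weight r a (S m) <= weight r a m.
Proof.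
  intros Ha. pose proof (weight_drop r a m). pose proof (ratio_range r a Ha).
  pose proof (INR_ge_2 b Hb).
  enough (0 <= (/ INR b) ^ r * ((1 - INR a / INR b ^ r) ^ m * (INR a / INR b ^ r))) by lra.
  apply Rmult_le_pos; [apply pow_le, Rlt_le, Rinv_0_lt_compat; lra|].
  apply Rmult_le_pos; [apply pow_le|]; lra.
Qed.

Lemma vlevel_nonneg r j m : 0 <= vlevel r j m.
Proof.
  apply sumR_nonneg. intros a Ha. destruct (Nat.eqb _ _); [apply weight_nonneg; lia|lra].
Qed.

Lemma vlevel_decr r j m : vlevel r j (S m) <= vlevel r j m.
Proof.
  apply sumR_le. intros a Ha. destruct (Nat.eqb _ _); [apply weight_decr; lia|lra].
Qed.

Lemma vpartial_le_v N j m : vpartial N j m <= v b d j m.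
Proof.
  revert j m. induction N as [|N IH]; intros j m.
  - pose proof (v_pos j m). unfold vpartial. simpl. lra.
  - assert (0 < INR b ^ S m) by (apply pow_lt; pose proof (INR_ge_2 b Hb); lra).
    apply Rmult_le_reg_l with (INR b ^ S m); auto.
    rewrite vpartial_succ, v_rec. apply Rplus_le_compat.
    + destruct j; cbn [vlead]; [lra|].
      apply bconv_le; [intros; apply pow_le, pos_INR|intros; apply IH].
    + apply bconv_le; [apply gammap_nonneg|intros; apply IH].
Qed.

Lemma vpartial_lim j m : is_lim_seq (fun N => vpartial N j m) (v b d j m).
Proof.
  set (w := fun j m => real (Lim_seq (fun N => vpartial N j m))).
  assert (Hw : forall j m, is_lim_seq (fun N => vpartial N j m) (w j m)).
  { intros j' m'. apply is_lim_seq_real_Lim, (ex_finite_lim_seq_incr _ (v b d j' m')).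
    - intros N. unfold vpartial. cbn [sumR]. pose proof (vlevel_nonneg N j' m'). lra.
    - intros N. apply vpartial_le_v. }
  assert (Hsys : vsystem w).
  { intros j' m'. apply (is_lim_seq_unique_R (fun N => INR b ^ S m' * vpartial (S N) j' m')).
    - apply is_lim_seq_mult'; [apply is_lim_seq_const|].
      apply (is_lim_seq_incr_1 (fun N => vpartial N j' m')), Hw.
    - apply (is_lim_seq_ext (fun N =>
               vlead (vpartial N) j' m' + bconv (gammap b d) (vpartial N j') m')).
      { intros N. symmetry. apply vpartial_succ. }
      apply is_lim_seq_plus'; [destruct j' as [|j']; cbn [vlead]; [apply is_lim_seq_const|]|];
        apply is_lim_seq_bconv; intros; apply Hw. }
  rewrite <- (vsystem_unique w Hsys j m). apply Hw.
Qed.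

Lemma v_minus_vpartial_decr N j m :
  v b d j (S m) - vpartial N j (S m) <= v b d j m - vpartial N j m.
Proof.
  assert (Htail : forall k, is_lim_seq (fun M => sumR M (fun r => vlevel (N + r) j k))
                                       (v b d j k - vpartial N j k)).
  { intros k. apply (is_lim_seq_ext (fun M => vpartial (M + N) j k - vpartial N j k)).
    - intros M. unfold vpartial. rewrite Nat.add_comm, sumR_add_len. ring.
    - apply is_lim_seq_minus'; [|apply is_lim_seq_const].
      apply (is_lim_seq_incr_n (fun M => vpartial M j k)), vpartial_lim. }
  apply (is_lim_seq_le _ _ _ _ (fun M => sumR_le M _ _ (fun r _ => vlevel_decr (N + r) j m))
           (Htail (S m)) (Htail m)).
Qed.

Lemma v_minus_vpartial_le N j m :
  v b d j m - vpartial N j m <= v b d j 0 - vpartial N j 0.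
Proof.
  induction m as [|m IH]; [lra|]. pose proof (v_minus_vpartial_decr N j m). lra.
Qed.

Fixpoint repdigit (j : nat) : nat :=
  match j with O => O | S j' => (d + b * repdigit j')%nat end.

Lemma repdigit_lt j : (repdigit j < b ^ j)%nat.
Proof. induction j as [|j IH]; simpl; nia. Qed.

Lemma kcount_pad_repdigit j : kcount_pad j (repdigit j) = j.
Proof.
  induction j as [|j IH]; [reflexivity|]. cbn [repdigit kcount_pad].
  replace (d + b * repdigit j)%nat with (d + repdigit j * b)%nat by lia.
  rewrite Nat.Div0.mod_add, Nat.div_add, Nat.mod_small, Nat.div_small, Nat.eqb_refl by lia.
  simpl. rewrite IH. reflexivity.
Qed.

(* [a] is a leading digit [t <> d] followed by [j] digits [d] *)
Lemma kcount_pad_witness j :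
  ~ (b = 2 /\ d = 1 /\ j = 0)%nat -> exists r a, (1 <= a < b ^ r)%nat /\ kcount_pad r a = j.
Proof.
  intros Hn.
  assert (Ht : exists t, (t < b)%nat /\ t <> d /\ (1 <= t \/ 1 <= repdigit j)%nat).
  { destruct (Nat.eq_dec d 1) as [->|Hd1]; [destruct (Nat.eq_dec b 2) as [->|Hb2]|].
    - exists 0%nat. destruct j as [|j]; [lia|]. simpl. lia.
    - exists 2%nat. lia.
    - exists 1%nat. lia. }
  destruct Ht as (t & Htb & Htd & Hpos). pose proof (repdigit_lt j).
  exists (S j), (t * b ^ j + repdigit j)%nat. split.
  - split; [nia|]. simpl. nia.
  - rewrite kcount_pad_top, kcount_pad_repdigit by auto. destruct (Nat.eqb_spec t d); lia.
Qed.

Lemma v_decr_m j m : ~ (b = 2 /\ d = 1 /\ j = 0)%nat -> v b d j (S m) < v b d j m.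
Proof.
  intros Hn. destruct (kcount_pad_witness j Hn) as (r & a & Ha & Hk).
  assert (Hw : 0 < weight r a m - weight r a (S m)).
  { rewrite weight_drop. pose proof (INR_ge_2 b Hb). pose proof (ratio_pos_lt_1 r a Ha).
    apply Rmult_lt_0_compat; [apply pow_lt, Rinv_0_lt_compat; lra|].
    apply Rmult_lt_0_compat; [apply pow_lt|]; lra. }
  assert (Hl : weight r a m - weight r a (S m) <= vlevel r j m - vlevel r j (S m)).
  { unfold vlevel. rewrite <- sumR_minus.
    eapply Rle_trans; [|apply (sumR_ge_term _ _ a); [|lia]].
    - cbv beta. rewrite Hk, Nat.eqb_refl. lra.
    - intros a' Ha'. pose proof (weight_decr r a' m ltac:(lia)). destruct (Nat.eqb _ _); lra. }
  assert (Hp : vlevel r j m - vlevel r j (S m) <=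
               vpartial (S r) j m - vpartial (S r) j (S m)).
  { unfold vpartial. rewrite <- sumR_minus.
    apply (sumR_ge_term _ (fun r' => vlevel r' j m - vlevel r' j (S m)) r); [|lia].
    intros r' _. pose proof (vlevel_decr r' j m). lra. }
  pose proof (v_minus_vpartial_decr (S r) j m). lra.
Qed.

(** * Monotonicity in [j] and the limit [j -> oo] *)

Lemma bconv_dprime_v0_lt m :
  (1 <= m)%nat -> bconv (pow (INR (b - 1 - d))) (v b d 0) m < INR b ^ S m.
Proof.
  intros Hm. pose proof (INR_ge_2 b Hb). pose proof (v_le_b 0 m).
  rewrite bconv_head. simpl pow at 1.
  pose proof (bconv_tail_le _ (fun i => pow_le _ i (pos_INR (b - 1 - d))) (v b d 0) (INR b) m
                (fun t _ => v_le_b 0 t)) as Ht.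
  rewrite bconv_pow_1 in Ht. simpl pow in Ht. change (INR b ^ S m) with (INR b * INR b ^ m).
  destruct (Nat.eq_dec d 0) as [Hd0|Hd0].
  - (* here [d' + 1 = b], so the bound [v_{0;m} <= b] has to be strict *)
    assert (v b d 0 m < INR b).
    { destruct m as [|m]; [lia|].
      pose proof (v_decr_m 0 m ltac:(intros (_ & H1 & _); lia)). pose proof (v_le_b 0 m). lra. }
    replace (INR (b - 1 - d) + 1) with (INR b) in Ht
      by (rewrite Hd0, Nat.sub_0_r, minus_INR by lia; simpl; lra).
    nra.
  - assert ((INR (b - 1 - d) + 1) ^ m < INR b ^ m).
    { apply pow_lt_strict; [|lia]. split; [pose proof (pos_INR (b - 1 - d)); lra|].
      rewrite <- S_INR. apply lt_INR. lia. }
    nra.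
Qed.

Lemma v_decr_of_vlead_decr j :
  (forall k, (1 <= k)%nat -> vlead (v b d) (S j) k < vlead (v b d) j k) ->
  forall m, (1 <= m)%nat -> v b d (S j) m < v b d j m.
Proof.
  intros Hlead m Hm. enough (0 < v b d j m - v b d (S j) m) by lra.
  apply (solves_pos (fun t => vlead (v b d) j t - vlead (v b d) (S j) t)
                    (fun t => v b d j t - v b d (S j) t)); auto.
  - intros k. rewrite bconv_minus, Rmult_minus_distr_l, !v_rec. ring.
  - rewrite !v_at_0. lra.
  - intros k Hk. specialize (Hlead k Hk). lra.
Qed.

Lemma v_decr_j j m : (1 <= m)%nat -> v b d (S j) m < v b d j m.
Proof.
  revert m. induction j as [|j IH]; apply v_decr_of_vlead_decr; intros k Hk; cbn [vlead].
  - apply bconv_dprime_v0_lt. auto.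
  - enough (0 < bconv (pow (INR (b - 1 - d))) (fun t => v b d j t - v b d (S j) t) k)
      by (rewrite bconv_minus in *; lra).
    apply bconv_pow_pos; [apply pos_INR| |].
    + intros [|t] _; [rewrite !v_at_0; lra|]. pose proof (IH (S t) ltac:(lia)). lra.
    + pose proof (IH k Hk). lra.
Qed.

Definition vlim (m : nat) : R := real (Lim_seq (fun j => v b d j m)).

Lemma vlim_lim m : is_lim_seq (fun j => v b d j m) (vlim m).
Proof.
  apply is_lim_seq_real_Lim, (ex_finite_lim_seq_decr _ 0).
  - intros j. destruct m as [|m]; [rewrite !v_at_0; lra|].
    apply Rlt_le, v_decr_j. lia.
  - intros j. pose proof (v_pos j m). lra.
Qed.

Definition powsum (i : nat) : R := sumR b (fun a => INR a ^ i).

Lemma gammap_plus_pow i : gammap b d i + INR (b - 1 - d) ^ i = powsum i.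
Proof. apply (sumR_skip b (b - 1 - d) (fun a => INR a ^ i)). lia. Qed.

Lemma vlim_rec m : INR b ^ S m * vlim m = bconv powsum vlim m.
Proof.
  transitivity (bconv (fun i => INR (b - 1 - d) ^ i + gammap b d i) vlim m).
  - rewrite bconv_coeff_plus. apply (is_lim_seq_unique_R (fun j => INR b ^ S m * v b d (S j) m)).
    + apply is_lim_seq_mult'; [apply is_lim_seq_const|].
      apply (is_lim_seq_incr_1 (fun j => v b d j m)), vlim_lim.
    + apply (is_lim_seq_ext (fun j => bconv (pow (INR (b - 1 - d))) (v b d j) m
                                      + bconv (gammap b d) (v b d (S j)) m)).
      { intros j. symmetry. apply (v_rec (S j)). }
      apply is_lim_seq_plus'; apply is_lim_seq_bconv; intros t _; [apply vlim_lim|].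
      apply (is_lim_seq_incr_1 (fun j => v b d j t)), vlim_lim.
  - apply sumR_ext. intros i _. rewrite <- gammap_plus_pow. f_equal. f_equal. ring.
Qed.

Lemma harmonic_rec m :
  INR b ^ S m * (INR b / (INR m + 1)) = bconv powsum (fun t => INR b / (INR t + 1)) m.
Proof.
  pose proof (pos_INR m). unfold bconv, powsum.
  transitivity (sumR (S m) (fun i => sumR b (fun a =>
     INR b * (Binomial.C m i * INR a ^ i / (INR (m - i) + 1))))).
  - rewrite sumR_swap.
    rewrite (sumR_ext b _ (fun a => INR b * (((INR a + 1) ^ S m - INR a ^ S m) / (INR m + 1))))
      by (intros a _; rewrite sumR_scal_l, binomial_integral; reflexivity).
    rewrite sumR_scal_l. unfold Rdiv. rewrite sumR_scal_r.
    rewrite (sumR_ext b _ (fun a => INR (S a) ^ S m - INR a ^ S m))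
      by (intros; rewrite S_INR; reflexivity).
    rewrite (sumR_telescope b (fun a => INR a ^ S m)). simpl. field. lra.
  - apply sumR_ext. intros i _. pose proof (pos_INR (m - i)).
    rewrite (sumR_ext b _ (fun a => INR b * Binomial.C m i / (INR (m - i) + 1) * INR a ^ i))
      by (intros; field; lra).
    rewrite sumR_scal_l. field. lra.
Qed.

Lemma powsum_0 : powsum 0 = INR b.
Proof. unfold powsum. simpl pow. rewrite sumR_const. ring. Qed.

Lemma powsum_rec_unique u u' :
  (forall m, INR b ^ S m * u m = bconv powsum u m) ->
  (forall m, INR b ^ S m * u' m = bconv powsum u' m) ->
  u 0%nat = u' 0%nat -> forall m, u m = u' m.
Proof.
  intros H H' H0 m. induction m as [[|m] IH] using (well_founded_induction lt_wf); auto.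
  specialize (H (S m)). specialize (H' (S m)). rewrite bconv_head, powsum_0 in H, H'.
  rewrite (bconv_tail_ext _ u u' (S m) IH) in H.
  assert (INR b < INR b ^ S (S m)).
  { pose proof (INR_ge_2 b Hb). rewrite <- (pow_1 (INR b)) at 1. apply Rlt_pow; [lra|lia]. }
  nra.
Qed.

Lemma vlim_harmonic m : vlim m = INR b / (INR m + 1).
Proof.
  apply (powsum_rec_unique vlim (fun t => INR b / (INR t + 1))); auto using vlim_rec, harmonic_rec.
  apply (is_lim_seq_unique_R (fun j => v b d j 0)); [apply vlim_lim|].
  apply (is_lim_seq_ext (fun _ => INR b)); [intros; symmetry; apply v_at_0|].
  simpl. replace (INR b / (0 + 1)) with (INR b) by field. apply is_lim_seq_const.
Qed.

(** * The Irwin series *)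

Lemma digits_aux_fuel f f' n :
  (n <= f)%nat -> (n <= f')%nat -> digits_aux b f n = digits_aux b f' n.
Proof.
  revert f' n. induction f as [|f IH]; intros [|f'] n H H'; cbn [digits_aux];
    try (replace n with 0%nat by lia; reflexivity).
  destruct (Nat.eqb_spec n 0); [reflexivity|].
  assert (n / b < n)%nat by (apply Nat.div_lt; lia).
  f_equal. apply IH; lia.
Qed.

Lemma kcount_step n :
  (0 < n)%nat -> kcount b d n = ((if Nat.eqb (n mod b) d then 1 else 0) + kcount b d (n / b))%nat.
Proof.
  intros Hn. unfold kcount, digits. destruct n as [|n']; [lia|]. cbn [digits_aux Nat.eqb].
  assert (S n' / b < S n')%nat by (apply Nat.div_lt; lia).
  rewrite (digits_aux_fuel n' (S n' / b) (S n' / b)) by lia. cbn [count_occ].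
  destruct (Nat.eq_dec (S n' mod b) d), (Nat.eqb_spec (S n' mod b) d); lia.
Qed.

Lemma kcount_split n r a :
  (1 <= n)%nat -> (a < b ^ r)%nat ->
  kcount b d (n * b ^ r + a) = (kcount b d n + kcount_pad r a)%nat.
Proof.
  intros Hn. revert a. induction r as [|r IH]; intros a Ha.
  - simpl in Ha. replace a with 0%nat by lia. simpl. rewrite Nat.mul_1_r, !Nat.add_0_r. reflexivity.
  - rewrite kcount_step by (pose proof (Nat.pow_lower_bound b (S r)); nia).
    replace (n * b ^ S r + a)%nat with (a + (n * b ^ r) * b)%nat by (simpl; lia).
    rewrite Nat.Div0.mod_add, Nat.div_add by lia.
    replace (a / b + n * b ^ r)%nat with (n * b ^ r + a / b)%nat by lia.
    rewrite IH; [cbn [kcount_pad]; lia|]. simpl in Ha. apply Nat.Div0.div_lt_upper_bound. lia.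
Qed.

(* [1/(x b^r + a) = b^-r/(x + 1) * 1/(1 - (1 - a/b^r)/(x + 1))] *)
Lemma weight_series r a x :
  (a <= b ^ r)%nat -> 0 < x ->
  is_series (fun m => weight r a m / (x + 1) ^ S m) (/ (x * INR b ^ r + INR a)).
Proof.
  intros Ha Hx. pose proof (ratio_range r a Ha) as Hy.
  pose proof (INR_ge_2 b Hb). assert (HP : 0 < INR b ^ r) by (apply pow_lt; lra).
  set (y := INR a / INR b ^ r) in *.
  assert (Hq : Rabs ((1 - y) / (x + 1)) < 1).
  { rewrite Rabs_right by (apply Rle_ge, Rdiv_le_0_compat; lra).
    apply Rmult_lt_reg_r with (x + 1); [lra|]. unfold Rdiv. rewrite Rmult_assoc, Rinv_l; lra. }
  replace (/ (x * INR b ^ r + INR a))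
    with (/ (1 - (1 - y) / (x + 1)) * ((/ INR b) ^ r / (x + 1))).
  - revert Hq. intros Hq%is_series_geom%(is_series_scal_r ((/ INR b) ^ r / (x + 1))).
    revert Hq. apply is_series_ext. intros m. unfold weight. fold y. simpl.
    unfold Rdiv. rewrite Rpow_mult_distr, !pow_inv. field.
    split; [apply pow_nonzero|]; lra.
  - unfold y. rewrite pow_inv. pose proof (pos_INR a). field. split; [|lra]. nra.
Qed.

Definition recip_level (r j : nat) (x : R) : R :=
  sumR (b ^ r) (fun a => if Nat.eqb (kcount_pad r a) j then / (x * INR b ^ r + INR a) else 0).

Definition recip_partial (N j : nat) (x : R) : R := sumR N (fun r => recip_level r j x).

Lemma vpartial_series N j x :
  0 < x -> is_series (fun m => vpartial N j m / (x + 1) ^ S m) (recip_partial N j x).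
Proof.
  intros Hx. unfold vpartial, recip_partial, recip_level, vlevel.
  apply (is_series_ext (fun m => sumR N (fun r => sumR (b ^ r) (fun a =>
      if Nat.eqb (kcount_pad r a) j then weight r a m / (x + 1) ^ S m else 0)))).
  - intros m. unfold Rdiv. rewrite <- sumR_scal_r. apply sumR_ext. intros r _.
    rewrite <- sumR_scal_r. apply sumR_ext. intros a _. destruct (Nat.eqb _ _); ring.
  - apply is_series_sumR. intros r _. apply is_series_sumR. intros a Ha.
    destruct (Nat.eqb _ _); [apply weight_series; auto; lia|apply is_series_zero].
Qed.

Definition vseries (j : nat) (x : R) : R := Series (fun m => v b d j m / (x + 1) ^ S m).

Lemma v_series j x : 0 < x -> is_series (fun m => v b d j m / (x + 1) ^ S m) (vseries j x).
Proof.
  intros Hx. apply Series_correct.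
  apply (@ex_series_le R_AbsRing R_CompleteNormedModule _ (fun m => INR b / (x + 1) ^ S m));
    [|exists (INR b / x); apply geom_tail_series; auto].
  intros m. change norm with Rabs. pose proof (v_pos j m). pose proof (v_le_b j m).
  assert (0 < (x + 1) ^ S m) by (apply pow_lt; lra).
  rewrite Rabs_right by (apply Rle_ge, Rdiv_le_0_compat; lra).
  unfold Rdiv. apply Rmult_le_compat_r; [apply Rlt_le, Rinv_0_lt_compat|]; lra.
Qed.

Lemma vseries_minus_recip_partial N j x :
  0 < x -> 0 <= vseries j x - recip_partial N j x <= (v b d j 0 - vpartial N j 0) / x.
Proof.
  intros Hx.
  assert (Hs : is_series (fun m => (v b d j m - vpartial N j m) / (x + 1) ^ S m)
                         (vseries j x - recip_partial N j x)).
  { apply (is_series_ext (fun m => v b d j m / (x + 1) ^ S m - vpartial N j m / (x + 1) ^ S m)).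
    - intros m. unfold Rdiv. rewrite Rmult_minus_distr_r. reflexivity.
    - exact (is_series_minus _ _ _ _ (v_series j x Hx) (vpartial_series N j x Hx)). }
  assert (Hterm : forall m, 0 <= (v b d j m - vpartial N j m) / (x + 1) ^ S m
                               <= (v b d j 0 - vpartial N j 0) / (x + 1) ^ S m).
  { intros m. pose proof (vpartial_le_v N j m). pose proof (v_minus_vpartial_le N j m).
    assert (0 < / (x + 1) ^ S m) by (apply Rinv_0_lt_compat, pow_lt; lra).
    unfold Rdiv. split; [apply Rmult_le_pos|apply Rmult_le_compat_r]; lra. }
  rewrite <- (is_series_unique _ _ Hs). split.
  - rewrite <- (is_series_unique _ _ is_series_zero). apply Series_le; [|eexists; exact Hs].
    intros m. split; [lra|apply Hterm].
  - rewrite <- (is_series_unique _ _ (geom_tail_series _ x Hx)).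
    apply Series_le; [apply Hterm|eexists; apply geom_tail_series; auto].
Qed.

Lemma recip_partial_lim j x :
  0 < x -> is_lim_seq (fun N => recip_partial N j x) (vseries j x).
Proof.
  intros Hx.
  assert (Hgap : is_lim_seq (fun N => (v b d j 0 - vpartial N j 0) / x) 0).
  { replace 0 with ((v b d j 0 - v b d j 0) * / x) by ring.
    apply is_lim_seq_mult'; [|apply is_lim_seq_const].
    apply is_lim_seq_minus'; [apply is_lim_seq_const|apply vpartial_lim]. }
  apply (is_lim_seq_le_le (fun N => vseries j x - (v b d j 0 - vpartial N j 0) / x) _
           (fun _ => vseries j x)).
  - intros N. pose proof (vseries_minus_recip_partial N j x Hx). lra.
  - replace (Finite (vseries j x)) with (Rbar_minus (vseries j x) 0) by (simpl; f_equal; ring).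
    apply is_lim_seq_minus'; [apply is_lim_seq_const|exact Hgap].
  - apply is_lim_seq_const.
Qed.

Lemma irwin_term_split k n r a :
  (1 <= n)%nat -> (a < b ^ r)%nat ->
  irwin_term b d k (n * b ^ r + a) =
  if Nat.eqb (kcount b d n + kcount_pad r a) k then / (INR n * INR b ^ r + INR a) else 0.
Proof.
  intros Hn Ha. unfold irwin_term. rewrite kcount_split by auto.
  assert (0 < n * b ^ r + a)%nat by (pose proof (Nat.pow_lower_bound b r); nia).
  destruct (Nat.ltb_spec 0 (n * b ^ r + a)); [|lia].
  rewrite plus_INR, mult_INR, pow_INR. reflexivity.
Qed.

Definition tail_cond (N0 k n : nat) : bool := andb (Nat.leb N0 n) (Nat.leb (kcount b d n) k).

(* the integers in [[N0 b^r, N1 b^r)] grouped by their leading part [n] *)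
Lemma irwin_block_sum k N0 N1 r :
  (1 <= N0)%nat ->
  sumR (N1 * b ^ r) (fun x => if Nat.leb (N0 * b ^ r) x then irwin_term b d k x else 0) =
  sumR N1 (fun n => if tail_cond N0 k n then recip_level r (k - kcount b d n) (INR n) else 0).
Proof.
  intros HN0. rewrite sumR_mul_len. apply sumR_ext. intros n Hn. unfold tail_cond.
  destruct (Nat.leb_spec N0 n); cbn [andb].
  - unfold recip_level. destruct (Nat.leb_spec (kcount b d n) k).
    + apply sumR_ext. intros a Ha.
      destruct (Nat.leb_spec (N0 * b ^ r) (n * b ^ r + a)); [|nia].
      rewrite irwin_term_split by (auto; lia).
      destruct (Nat.eqb_spec (kcount b d n + kcount_pad r a) k),
        (Nat.eqb_spec (kcount_pad r a) (k - kcount b d n)); try lia; reflexivity.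
    + apply sumR_eq_0. intros a Ha.
      destruct (Nat.leb_spec (N0 * b ^ r) (n * b ^ r + a)); [|nia].
      rewrite irwin_term_split by (auto; lia).
      destruct (Nat.eqb_spec (kcount b d n + kcount_pad r a) k); [lia|reflexivity].
  - apply sumR_eq_0. intros a Ha.
    destruct (Nat.leb_spec (N0 * b ^ r) (n * b ^ r + a)); [|reflexivity].
    assert (S n * b ^ r <= N0 * b ^ r)%nat by (apply Nat.mul_le_mono_r; lia). simpl in *. lia.
Qed.

Lemma irwin_partial_sum k N0 M :
  (1 <= N0)%nat ->
  sumR (N0 * b ^ M) (irwin_term b d k) =
  sumR N0 (irwin_term b d k) +
  sumR (b * N0) (fun n =>
    if tail_cond N0 k n then recip_partial M (k - kcount b d n) (INR n) else 0).
Proof.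
  intros HN0. induction M as [|M IH].
  - rewrite Nat.pow_0_r, Nat.mul_1_r, (sumR_eq_0 (b * N0)); [ring|].
    intros n _. destruct (tail_cond N0 k n); reflexivity.
  - rewrite (sumR_split_at (N0 * b ^ S M) (N0 * b ^ M))
      by (apply Nat.mul_le_mono_l; simpl; pose proof (Nat.pow_lower_bound b M); nia).
    rewrite IH. replace (N0 * b ^ S M)%nat with ((b * N0) * b ^ M)%nat by (simpl; lia).
    rewrite irwin_block_sum, Rplus_assoc, <- sumR_plus by auto. f_equal. apply sumR_ext.
    intros n _. destruct (tail_cond N0 k n); [reflexivity|ring].
Qed.

Lemma irwin_series k N0 :
  (1 <= N0)%nat ->
  is_series (irwin_term b d k)
    (sumR N0 (irwin_term b d k) +
     sumR (b * N0) (fun n => if tail_cond N0 k n then vseries (k - kcount b d n) (INR n) else 0)).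
Proof.
  intros HN0. apply (is_series_of_subseq _ (fun M => (N0 * b ^ M)%nat)).
  - intros n. unfold irwin_term. destruct (Nat.ltb_spec 0 n), (Nat.eqb _ k); cbn [andb]; try lra.
    apply Rlt_le, Rinv_0_lt_compat, (lt_INR 0). lia.
  - intros M. apply Nat.mul_le_mono_l. simpl. nia.
  - intros M. pose proof (Nat.pow_gt_lin_r b M ltac:(lia)). nia.
  - apply (is_lim_seq_ext (fun M => sumR N0 (irwin_term b d k) + sumR (b * N0) (fun n =>
             if tail_cond N0 k n then recip_partial M (k - kcount b d n) (INR n) else 0))).
    { intros M. symmetry. apply irwin_partial_sum. auto. }
    apply is_lim_seq_plus'; [apply is_lim_seq_const|]. apply is_lim_seq_sumR. intros n _.
    unfold tail_cond. destruct (Nat.leb_spec N0 n); cbn [andb]; [|apply is_lim_seq_const].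
    destruct (Nat.leb _ _); [|apply is_lim_seq_const].
    apply recip_partial_lim, (lt_INR 0). lia.
Qed.

Lemma vseries_tail j x :
  0 < x -> is_series (fun m => v b d j (S m) / (x + 1) ^ S (S m)) (vseries j x - INR b / (x + 1)).
Proof.
  intros Hx. pose proof (v_series j x Hx) as Hs.
  assert (E : vseries j x = plus (vseries j x - INR b / (x + 1)) (v b d j 0 / (x + 1) ^ 1))
    by (rewrite v_at_0, pow_1; cbn; ring).
  rewrite E in Hs. exact (is_series_incr_1 _ _ Hs).
Qed.

Lemma irwin_identity k N0 :
  (1 <= N0)%nat ->
  let W := sumR (b * N0) (fun n => if tail_cond N0 k n
             then vseries (k - kcount b d n) (INR n) - INR b / (INR n + 1) else 0) in
  is_series (fun m => sumR (b * N0) (fun n => if tail_cond N0 k n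
               then v b d (k - kcount b d n) (S m) / (INR n + 1) ^ S (S m) else 0)) W /\
  is_series (irwin_term b d k)
    (sumR N0 (irwin_term b d k) +
     INR b * sumR (b * N0) (fun n => if tail_cond N0 k n then / (INR n + 1) else 0) + W).
Proof.
  intros HN0 W. split.
  - apply is_series_sumR. intros n _. destruct (tail_cond N0 k n) eqn:Hn; [|apply is_series_zero].
    apply vseries_tail. unfold tail_cond in Hn. apply andb_prop in Hn as [Hn _].
    apply Nat.leb_le in Hn. apply (lt_INR 0). lia.
  - replace (_ + _ + W) with (sumR N0 (irwin_term b d k) + sumR (b * N0) (fun n =>
      if tail_cond N0 k n then vseries (k - kcount b d n) (INR n) else 0)).
    + apply irwin_series. auto.
    + unfold W. rewrite <- sumR_scal_l, Rplus_assoc, <- sumR_plus. f_equal.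
      apply sumR_ext. intros n _. destruct (tail_cond N0 k n); [|ring].
      pose proof (pos_INR n). field. lra.
Qed.

End IrwinRecursion.

Lemma v_2_1_0 m : v 2 1 0 m = 2.
Proof.
  apply (solves_unique 2 1 ltac:(lia) ltac:(lia) (vlead 2 1 (v 2 1) 0) _ (fun _ => 2)).
  - intros k. apply v_rec; lia.
  - intros k. rewrite bconv_const, bconv_gammap_1 by lia. cbn [vlead sumR]. simpl. ring.
Qed.

Theorem mainTheorem2 (b d : nat) (Hb : (2 <= b)%nat) (Hd : (d < b)%nat) :
  (* the identity, for every l >= 1, k >= 0 *)
  (forall l k : nat, (1 <= l)%nat ->
     let A := sumR (Nat.pow b (l - 1))
                (fun n => if andb (Nat.ltb 0 n) (Nat.eqb (kcount b d n) k)
                          then / INR n else 0) in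
     let B := INR b * sumR (Nat.pow b l)
                (fun n => if andb (Nat.leb (Nat.pow b (l - 1)) n) (Nat.leb (kcount b d n) k)
                          then / (INR n + 1) else 0) in
     (* w m' is the term of index m = m' + 1 of the series over m >= 1 *)
     let w := fun m' : nat => sumR (Nat.pow b l)
                (fun n => if andb (Nat.leb (Nat.pow b (l - 1)) n) (Nat.leb (kcount b d n) k)
                          then v b d (k - kcount b d n) (S m') / (INR n + 1) ^ (S (S m'))
                          else 0) in
     ex_series w /\ is_series (irwin_term b d k) (A + B + Series w) /\
     H b d k = A + B + Series w) /\
  (* (i) *)
  (forall j m : nat, (1 <= m)%nat -> 0 < v b d j m <= INR b) /\
  (* (ii) *)
  (forall j : nat,
     if andb (Nat.eqb b 2) (andb (Nat.eqb d 1) (Nat.eqb j 0))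
     then forall m : nat, v b d 0 m = 2
     else forall m : nat, v b d j (S m) < v b d j m) /\
  (* (iii) *)
  (forall m : nat, (1 <= m)%nat ->
     (forall j : nat, v b d (S j) m < v b d j m) /\
     is_lim_seq (fun j => v b d j m) (INR b / (INR m + 1))).
Proof.
  split.
  { intros l k Hl. cbv zeta.
    assert (HN0 : (1 <= Nat.pow b (l - 1))%nat) by (apply Nat.pow_lower_bound; lia).
    replace (Nat.pow b l) with (b * Nat.pow b (l - 1))%nat
      by (destruct l as [|l]; [lia|]; simpl; rewrite Nat.sub_0_r; reflexivity).
    destruct (irwin_identity b d Hb Hd k _ HN0) as [Hw Hirw]. unfold tail_cond in Hw, Hirw.
    rewrite (is_series_unique _ _ Hw).
    split; [eexists; exact Hw|]. split; [exact Hirw|]. apply is_series_unique. exact Hirw. }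
  split; [intros j m _; split; [apply v_pos|apply v_le_b]; auto|].
  split.
  - intros j.
    destruct (Nat.eqb_spec b 2), (Nat.eqb_spec d 1), (Nat.eqb_spec j 0); subst; cbn [andb];
      try (intros m; apply v_decr_m; auto; intros (? & ? & ?); lia).
    apply v_2_1_0.
  - intros m Hm. split; [intros j; apply v_decr_j; auto|].
    rewrite <- (vlim_harmonic b d Hb Hd). apply vlim_lim; auto.
Qed.
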